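(* Let $\ell$ be a $c$-approximate pseudo-metric ($c\ge1$), $\mathcal{H}\subseteq\mathcal{Y}^{\mathcal{X}}$ with $\operatorname{diam}(\mathcal{H})<\infty$, $U\subseteq\mathcal{H}$, $x\in\mathcal{X}$, $s_0,s_1\in\mathcal{Y}$, $\gamma=\ell(s_0,s_1)$, and $U_b=\{h\in U:h(x)=s_b\}$ for $b\in\{0,1\}$, with $U_0,U_1$ both nonempty. Then there exists $b\in\{0,1\}$ with $\Phi(U_b)\le\Phi(U)-\gamma/(4c)$.
   Context: $c$-approximate pseudo-metric: $\ell(y,y)=0$, symmetry, and $\ell(y_1,y_2)\le c(\ell(y_1,y_3)+\ell(y_2,y_3))$. $d_\ell(f,g)=\sup_{x}\ell(f(x),g(x))$, $\operatorname{diam}(\mathcal{H})=\sup_{f,g\in\mathcal{H}}d_\ell(f,g)$. $N(U,\varepsilon)$ is the minimal cardinality of $S\subseteq\mathcal{H}$ such that each $u\in U$ is within $d_\ell$-distance $\le\varepsilon$ of some element of $S$. $\Phi(U)=\int_0^{\operatorname{diam}(\mathcal{H})}\log_2N(U,\varepsilon)\,d\varepsilon\in[0,\infty]$. *)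

From mathcomp Require Import all_boot all_order all_algebra.
From mathcomp Require Import all_classical all_reals all_analysis.
Set Implicit Arguments. Unset Strict Implicit. Unset Printing Implicit Defensive.
Import Order.TTheory GRing.Theory Num.Theory.
Local Open Scope classical_set_scope.
Local Open Scope ring_scope.

Section Defs.
Context {R : realType} {X Y : Type}.

Definition approx_pmetric (c : R) (ell : Y -> Y -> R) : Prop :=
  (forall y, ell y y = 0) /\
  (forall y1 y2, ell y1 y2 = ell y2 y1) /\
  (forall y1 y2 y3, ell y1 y2 <= c * (ell y1 y3 + ell y2 y3)).

Definition dl (ell : Y -> Y -> R) (f g : X -> Y) : \bar R :=
  ereal_sup [set (ell (f x) (g x))%:E | x in [set: X]].

Definition diam (ell : Y -> Y -> R) (H : set (X -> Y)) : \bar R :=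
  ereal_sup [set dl ell fg.1 fg.2 | fg in [set fg | H fg.1 /\ H fg.2]].

(* A finite S of cardinality n is represented by an enumeration 'I_n -> S. *)
Definition covnum (ell : Y -> Y -> R) (H U : set (X -> Y)) (eps : R) : \bar R :=
  ereal_inf [set (n%:R)%:E | n in [set n : nat | exists S : 'I_n -> (X -> Y),
      (forall i, H (S i)) /\
      (forall u, U u -> exists i, (dl ell u (S i) <= eps%:E)%E)]].

Definition log2e (v : \bar R) : \bar R :=
  match v with
  | r%:E => if r <= 0 then -oo%E else (ln r / ln 2)%:E
  | +oo%E => +oo%E
  | -oo%E => -oo%E
  end.

Definition Phi (ell : Y -> Y -> R) (H U : set (X -> Y)) : \bar R :=
  (\int[lebesgue_measure]_(e in `[0%R, fine (diam ell H)]%classic) log2e (covnum ell H U e))%E.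

End Defs.

(* If 2 c eps < gamma,
   no d_ell-ball of radius eps meets both U0 and U1 (approximate triangle
   inequality at x), so N(U0, eps) + N(U1, eps) <= N(U, eps), and then
   (log2 N(U0, eps) + 1) + (log2 N(U1, eps) + 1) <= 2 log2 N(U, eps) by AM-GM.
   Integrating, with the bonus 1 on [0, gamma/(4c)[, gives
   Phi(U0) + Phi(U1) + 2 gamma/(4c) <= 2 Phi(U), so the smaller of Phi(U0)
   and Phi(U1) is at most Phi(U) - gamma/(4c). *)
From mathcomp Require Import all_boot all_order all_algebra.
From mathcomp Require Import all_classical all_reals all_analysis.
From mathcomp Require Import ring lra measurable_realfun.
Import Order.TTheory GRing.Theory Num.Theory.
Local Open Scope classical_set_scope.
Local Open Scope ring_scope.

Section Log2.
Context {R : realType}.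
Local Open Scope ereal_scope.

Lemma ln2_gt0 : (0 < ln (2 : R))%R.
Proof. by apply: ln_gt0; rewrite ltr1n. Qed.

Lemma le_log2e (a b : \bar R) : a <= b -> log2e a <= log2e b.
Proof.
case: a => [r||]; case: b => [s||] //=; rewrite ?lee_fin => rs.
- case: ifPn => r0; first by rewrite leNye.
  have r_gt0 : (0 < r)%R by rewrite ltNge.
  rewrite ifF; last by apply/negbTE; rewrite -ltNge (lt_le_trans r_gt0).
  by rewrite lee_fin ler_pM2r ?invr_gt0 ?ln2_gt0 // ler_ln // posrE (lt_le_trans r_gt0).
all: by case: ifPn; rewrite ?leNye ?leey.
Qed.

Lemma log2e_ge0 (a : \bar R) : 1 <= a -> 0 <= log2e a.
Proof.
case: a => [r||] //=; rewrite lee_fin => r1.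
rewrite ifF; last by apply/negbTE; rewrite -ltNge (lt_le_trans ltr01).
by rewrite lee_fin divr_ge0 ?ln_ge0 // ltW // ltr1n.
Qed.

(* 4ab <= (a + b)^2 <= n^2, i.e. (log2 a + 1) + (log2 b + 1) <= 2 log2 n. *)
Lemma log2e_addS_le (a b n : \bar R) : 1 <= a -> 1 <= b -> a + b <= n ->
  (log2e a + 1) + (log2e b + 1) <= log2e n + log2e n.
Proof.
case: n => [r||]; [|by move=> *; rewrite /= leey|by case: a => // [p|]; case: b].
case: a => [p||] //; case: b => [q||] //; rewrite !lee_fin => p1 q1 pqr.
rewrite /= !ifF; try (apply/negbTE; rewrite -ltNge; lra).
rewrite -!EFinD lee_fin -(ler_pM2r ln2_gt0) !mulrDl !divfK ?gt_eqF ?ln2_gt0 //.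
rewrite mul1r -!lnM ?posrE; try lra.
rewrite ler_ln ?posrE; try nra.
have sq_pq : ((p + q) * (p + q) <= r * r)%R by apply: ler_pM; lra.
have : (0 <= (p - q) * (p - q))%R by rewrite -expr2 sqr_ge0.
have -> : (p * 2 * (q * 2) = (p + q) * (p + q) - (p - q) * (p - q))%R by ring.
lra.
Qed.

End Log2.

Section Covering.
Context {R : realType} {X Y : Type} (ell : Y -> Y -> R) (H : set (X -> Y)).
Local Open Scope ereal_scope.

Lemma ell_le_dl (f g : X -> Y) z : (ell (f z) (g z))%:E <= dl ell f g.
Proof. by apply: ereal_sup_ubound; exists z. Qed.

Lemma dl_le_diam (f g : X -> Y) : H f -> H g -> dl ell f g <= diam ell H.
Proof. by move=> Hf Hg; apply: ereal_sup_ubound; exists (f, g). Qed.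

Lemma covnum_ge1 (V : set (X -> Y)) e : V !=set0 -> 1 <= covnum ell H V e.
Proof.
move=> [v Vv]; apply/ereal_infP => _ [n [S [_ cov]] <-].
have [i _] := cov v Vv; rewrite lee_fin ler1n.
exact: leq_ltn_trans (leq0n i) (ltn_ord i).
Qed.

Lemma le_covnum (V W : set (X -> Y)) e : V `<=` W ->
  covnum ell H V e <= covnum ell H W e.
Proof.
move=> VW; apply: ereal_inf_le_tmp => _ [n [S [HS cov]] <-]; exists n => //.
by exists S; split => // u /VW; exact: cov.
Qed.

Lemma covnum_nonincreasing (V : set (X -> Y)) (e1 e2 : R) : (e1 <= e2)%R ->
  covnum ell H V e2 <= covnum ell H V e1.
Proof.
move=> e12; apply: ereal_inf_le_tmp => _ [n [S [HS cov]] <-]; exists n => //.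
exists S; split => // u /cov [i Hi]; exists i.
by apply: le_trans Hi _; rewrite lee_fin.
Qed.

Lemma covnum_le_card (V : set (X -> Y)) n (S : 'I_n -> X -> Y) (A : {set 'I_n}) e :
  (forall i, H (S i)) ->
  (forall u, V u -> exists2 i, i \in A & dl ell u (S i) <= e%:E) ->
  covnum ell H V e <= #|A|%:R%:E.
Proof.
move=> HS cov; apply: ereal_inf_lbound; exists #|A| => //.
exists (fun j => S (enum_val j)); split=> [j|u /cov [i iA Hi]]; first exact: HS.
by exists (enum_rank_in iA i); rewrite enum_rankK_in.
Qed.

Section Split.
Context {c : R} {x : X} {s0 s1 : Y}.
Hypotheses (c_ge0 : (0 <= c)%R) (ell_approx : approx_pmetric c ell).

(* Every centre S i serves U0 or U1 but never both: its distance to s0 and s1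
   would otherwise violate the approximate triangle inequality. *)
Lemma covnum_fibres_le (U : set (X -> Y)) (e : R) :
  (c * (e + e) < ell s0 s1)%R ->
  covnum ell H [set h | U h /\ h x = s0] e + covnum ell H [set h | U h /\ h x = s1] e
  <= covnum ell H U e.
Proof.
move=> small; have [_ [_ ell_tri]] := ell_approx.
apply/ereal_infP => _ [n [S [HS cov]] <-].
pose A := finset (fun i : 'I_n =>
  `[< exists2 u, U u /\ u x = s0 & dl ell u (S i) <= e%:E >]).
have near_x u i : dl ell u (S i) <= e%:E -> (ell (u x) (S i x) <= e)%R.
  by move=> h; rewrite -lee_fin (le_trans (ell_le_dl _ _ _) h).
have cov0 : covnum ell H [set h | U h /\ h x = s0] e <= #|A|%:R%:E.
  apply: covnum_le_card HS _ => u [Uu ux]; have [i Hi] := cov u Uu.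
  by exists i => //; rewrite inE; apply/asboolP; exists u.
have cov1 : covnum ell H [set h | U h /\ h x = s1] e <= #|~: A|%:R%:E.
  apply: covnum_le_card HS _ => u [Uu ux]; have [i Hi] := cov u Uu.
  exists i => //; rewrite !inE; apply/negP => /asboolP [v [Uv vx] Hv].
  have := ell_tri (v x) (u x) (S i x); rewrite vx ux => tri.
  have : (c * (ell s0 (S i x) + ell s1 (S i x)) <= c * (e + e))%R.
    by rewrite ler_wpM2l // lerD // -?vx -?ux; apply: near_x.
  by move=> /(le_trans tri) /(lt_le_trans small); rewrite ltxx.
by apply: le_trans (leeD cov0 cov1) _; rewrite -EFinD -natrD cardsC card_ord.
Qed.

End Split.

Definition logcov (V : set (X -> Y)) (e : R) : \bar R := log2e (covnum ell H V e).

Lemma logcov_ge0 (V : set (X -> Y)) e : V !=set0 -> 0 <= logcov V e.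
Proof. by move=> V0; apply/log2e_ge0/covnum_ge1. Qed.

(* logcov V is nonincreasing, so its superlevel sets are intervals. *)
Lemma measurable_logcov (V : set (X -> Y)) (D : set R) : measurable D ->
  measurable_fun D (logcov V).
Proof.
move=> mD; apply: (measurability _ (ErealGenCInfty.measurableE R)) => // _ [_ [r ->] <-].
apply: measurableI => //; apply: is_interval_measurable => s t /=.
rewrite !in_itv /= !andbT => rs rt u /andP[su ut].
by rewrite in_itv /= andbT (le_trans rt) // le_log2e // covnum_nonincreasing.
Qed.

Lemma Phi_ge0 (V : set (X -> Y)) : V !=set0 -> 0 <= Phi ell H V.
Proof. by move=> V0; apply: integral_ge0 => e _; apply: logcov_ge0. Qed.

End Covering.

Lemma integral_indic_itv_co {R : realType} (a D : R) : (0 <= a <= D)%R ->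
  (\int[lebesgue_measure]_(e in `[0%R, D]) (\1_`[0%R, a[ e : R)%:E = a%:E)%E.
Proof.
move=> /andP[a0 aD]; rewrite integral_indic //.
have -> : `[0, a[%classic `&` `[0, D]%classic = `[0, a[%classic :> set R.
  apply/seteqP; split => e /=; first by case.
  rewrite !in_itv /= => /andP[e0 ea]; split; first by rewrite e0.
  by rewrite e0 (le_trans (ltW ea)).
apply: eq_trans (lebesgue_measure_itv `[0, a[) _ => /=.
by rewrite lte_fin; case: ltgtP a0 => // [_|<-]; rewrite ?sube0.
Qed.

Section PhiSplit.
Context {R : realType} {X Y : Type} (ell : Y -> Y -> R) (H U : set (X -> Y)).
Context {c a : R} {x : X} {s0 s1 : Y}.
Hypotheses (c_gt0 : 0 < c) (ell_approx : approx_pmetric c ell).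
Hypotheses (a_ge0 : 0 <= a) (a_le_diam : a <= fine (diam ell H)).
Hypothesis a_small : c * (a + a) <= ell s0 s1.
Let U0 := [set h | U h /\ h x = s0].
Let U1 := [set h | U h /\ h x = s1].
Hypotheses (U0_neq0 : U0 !=set0) (U1_neq0 : U1 !=set0).
Local Open Scope ereal_scope.

Let I := `[0%R, fine (diam ell H)]%classic : set R.
Let measurable_I : measurable I.
Proof. exact: measurable_itv. Qed.

Let bonus (e : R) : \bar R := (\1_`[0, a[ e : R)%:E.

Let measurable_bonus : measurable_fun I bonus.
Proof. by apply/measurable_EFinP; exact: measurable_indic. Qed.

Let bonus_ge0 e : 0 <= bonus e.
Proof. by rewrite lee_fin indicE. Qed.

Let U_neq0 : U !=set0.
Proof. by case: U0_neq0 => h [Uh _]; exists h. Qed.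

Let integral_add {f g : R -> \bar R} :
  (forall e, I e -> 0 <= f e) -> measurable_fun I f ->
  (forall e, I e -> 0 <= g e) -> measurable_fun I g ->
  \int[lebesgue_measure]_(e in I) f e + \int[lebesgue_measure]_(e in I) g e
  = \int[lebesgue_measure]_(e in I) (f e + g e).
Proof. by move=> f0 mf g0 mg; rewrite ge0_integralD. Qed.

Let integral_logcov_bonus {V : set (X -> Y)} : V !=set0 ->
  \int[lebesgue_measure]_(e in I) (logcov ell H V e + bonus e) = Phi ell H V + a%:E.
Proof.
move=> V0; rewrite ge0_integralD //; last exact: measurable_logcov.
- by rewrite integral_indic_itv_co // a_ge0 a_le_diam.
- by move=> e _; apply: logcov_ge0.
Qed.

Let logcov_fibres_le e : I e ->
  (logcov ell H U0 e + bonus e) + (logcov ell H U1 e + bonus e)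
  <= logcov ell H U e + logcov ell H U e.
Proof.
move=> _; rewrite /bonus indicE; have [ea|ea] := boolP (e \in `[0%R, a[%classic).
  rewrite /logcov; apply: log2e_addS_le; try exact: covnum_ge1.
  apply: (covnum_fibres_le ell H (ltW c_gt0) ell_approx).
  move: ea; rewrite inE /= in_itv /= => /andP[_ ea].
  by apply: lt_le_trans a_small; rewrite ltr_pM2l // ltrD.
by rewrite !adde0; apply: leeD; apply/le_log2e/le_covnum => h [].
Qed.

Lemma Phi_fibres_le :
  (Phi ell H U0 + a%:E) + (Phi ell H U1 + a%:E) <= Phi ell H U + Phi ell H U.
Proof.
have mlog V : measurable_fun I (logcov ell H V) by exact: measurable_logcov.
have mlogb V : measurable_fun I (fun e => logcov ell H V e + bonus e).
  exact: emeasurable_funD (mlog V) measurable_bonus.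
have lg0 V : V !=set0 -> forall e, I e -> 0 <= logcov ell H V e.
  by move=> V0 e _; apply: logcov_ge0.
have lgb0 V : V !=set0 -> forall e, I e -> 0 <= logcov ell H V e + bonus e.
  by move=> V0 e Ie; rewrite adde_ge0 ?lg0.
rewrite -(integral_logcov_bonus U0_neq0) -(integral_logcov_bonus U1_neq0).
rewrite (integral_add (lgb0 _ U0_neq0) (mlogb _) (lgb0 _ U1_neq0) (mlogb _)).
rewrite (integral_add (lg0 _ U_neq0) (mlog _) (lg0 _ U_neq0) (mlog _)).
apply: ge0_le_integral.
- exact: measurable_I.
- by move=> e Ie; rewrite adde_ge0 ?lgb0.
- exact: emeasurable_funD (mlogb _) (mlogb _).
- exact: emeasurable_funD (mlog _) (mlog _).
- exact: logcov_fibres_le.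
Qed.

End PhiSplit.

Lemma min_le_sub_of_sum_le {R : realType} (p p0 p1 : \bar R) (a : R) :
  (0 <= p0)%E -> (0 <= p1)%E ->
  (p0 + a%:E + (p1 + a%:E) <= p + p)%E ->
  (p0 <= p - a%:E)%E \/ (p1 <= p - a%:E)%E.
Proof.
case: p => [p||]; [|by left; rewrite /= leey|].
- case: p0 => [p0||] //; case: p1 => [p1||] // _ _.
  rewrite -!EFinB -!EFinD !lee_fin => sum_le.
  by have [p01|p10] := leP p0 p1; [left|right]; lra.
- by case: p0 => [p0||] //; case: p1 => [p1||].
Qed.

Theorem lemma3p3 (R : realType) (X Y : Type) (c : R) (ell : Y -> Y -> R)
  (H U : set (X -> Y)) (x : X) (s0 s1 : Y) :
  1 <= c ->
  approx_pmetric c ell ->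
  (diam ell H < +oo)%E ->
  U `<=` H ->
  [set h | U h /\ h x = s0] !=set0 ->
  [set h | U h /\ h x = s1] !=set0 ->
  exists b : bool,
    (Phi ell H [set h | U h /\ h x = (if b then s1 else s0)]
       <= Phi ell H U - (ell s0 s1 / (4 * c))%:E)%E.
Proof.
move=> c1 ell_approx diam_fin UH U0_neq0 U1_neq0.
have c_gt0 : 0 < c by apply: lt_le_trans c1.
set g := ell s0 s1; set a := g / (4 * c).
have g_ge0 : 0 <= g.
  by have := ell_approx.2.2 s0 s0 s1; rewrite ell_approx.1 pmulr_rge0 // /g; lra.
have g_le_diam : g <= fine (diam ell H).
  rewrite /g; have [[h0 [U0h0 <-]] [h1 [U1h1 <-]]] := (U0_neq0, U1_neq0).
  have := le_trans (ell_le_dl ell h0 h1 x) (dl_le_diam ell H h0 h1 (UH _ U0h0) (UH _ U1h1)).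
  by move: diam_fin; case: (diam ell H) => [r _|//|//]; rewrite lee_fin.
have a_ge0 : 0 <= a by rewrite divr_ge0 // mulr_ge0 // ltW.
have a_le_g : a <= g by rewrite ler_pdivrMr ?mulr_gt0 //; nra.
have a_small : c * (a + a) <= g.
  have -> : c * (a + a) = g / 2 by rewrite /a; field; rewrite gt_eqF.
  lra.
have := Phi_fibres_le ell H U c_gt0 ell_approx a_ge0 (le_trans a_le_g g_le_diam) a_small
  U0_neq0 U1_neq0.
case/min_le_sub_of_sum_le; try exact: Phi_ge0.
- by exists false.
- by exists true.
Qed.
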